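(* Let $k\geq 1$ be a fixed integer, $p=\frac{\log n+(k+1)\log\log n-\log\log\log n}{n}$, $G=G(n,p)$ and $D=\frac{\log n}{\log\log n}$. For a fixed $t\in\mathbb{N}$ and a fixed $0<\alpha<1$, almost surely there does not exist a subset $S\subset V(G)$ with $|S|\leq \alpha tD$ and $e[S]\geq |S|+t$.
   Context: $\log$ is the natural logarithm; $G(n,p)$ is the binomial random graph on $n$ vertices, $n\to\infty$; ''almost surely'' means with probability tending to $1$; $e[S]$ denotes the number of edges of the subgraph of $G$ induced by $S$. *)

From HB Require Import structures.
From mathcomp Require Import all_boot all_order all_algebra.
From mathcomp Require Import all_classical all_reals all_analysis.
Set Implicit Arguments. Unset Strict Implicit. Unset Printing Implicit Defensive.
Import Order.TTheory GRing.Theory Num.Theory.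
Local Open Scope ring_scope.

(* Possible edges of a simple graph on vertex set 'I_n: pairs (i,j) with i < j. *)
Definition pairs (n : nat) : {set 'I_n * 'I_n} := [set e : 'I_n * 'I_n | (val e.1 < val e.2)%N].

(* A graph on 'I_n is an edge set G \subset pairs n (i.e. G \in powerset (pairs n)). *)
Definition eS (n : nat) (G : {set 'I_n * 'I_n}) (S : {set 'I_n}) : nat :=
  #|[set e in G | (e.1 \in S) && (e.2 \in S)]|.

(* Probability in G(n,p) of the graph property P: each of the C(n,2) possible
   edges is present independently with probability p. *)
Definition gnp_prob (R : realType) (n : nat) (p : R)
  (P : {set 'I_n * 'I_n} -> bool) : R :=
  \sum_(G in powerset (pairs n) | P G)
     p ^+ #|G| * (1 - p) ^+ (#|pairs n| - #|G|).

Definition p_k (R : realType) (k n : nat) : R :=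
  (ln (n%:R : R) + (k.+1)%:R * ln (ln (n%:R : R)) - ln (ln (ln (n%:R : R))))
    / n%:R.

Definition Dn (R : realType) (n : nat) : R := ln (n%:R : R) / ln (ln (n%:R : R)).

Definition bad (R : realType) (alpha : R) (t n : nat)
  (G : {set 'I_n * 'I_n}) : bool :=
  [exists S : {set 'I_n},
     ((#|S|%:R : R) <= alpha * t%:R * Dn R n) && (#|S| + t <= eS G S)%N].

From HB Require Import structures.
From mathcomp Require Import all_boot all_order all_algebra.
From mathcomp Require Import all_classical all_reals all_analysis.
From mathcomp Require Import zify ring lra.
Set Implicit Arguments. Unset Strict Implicit. Unset Printing Implicit Defensive.
Import Order.TTheory GRing.Theory Num.Theory numFieldNormedType.Exports.
Local Open Scope classical_set_scope.
Local Open Scope ring_scope.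

(* First-moment method.  If e[S] >= |S| + t, some (|S| + t)-set of the at most
   |S|^2 pairs inside S is present, so with X = alpha t log n / log log n
     P(bad) <= sum_(s <= X) C(n, s) C(s^2, s + t) p^(s + t)
            <= (X + 1) (e^2 n p)^X (e X p)^t,
   using C(N, m) m^m <= (e N)^m.  As n p <= 2 log n, we get
   (e^2 n p)^X <= n^(alpha t) e^(3X) and (e X p)^t <= (2 e)^t log^(2t) n / n^t.
   Both e^(3X) and the polylogarithmic factor are at most n^((1 - alpha) t / 4),
   hence P(bad) <= 2 (2 e)^t n^(-(1 - alpha) t / 2). *)

Section SubsetSums.
Variable R : comPzRingType.

Lemma sum_subsets_card (T : finType) (B : {set T}) (f : nat -> R) :
  \sum_(H : {set T} | H \subset B) f #|H| =
  \sum_(k < #|B|.+1) 'C(#|B|, k)%:R * f k.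
Proof.
rewrite (partition_big (fun H : {set T} => (inord #|H| : 'I_#|B|.+1)) predT) //=.
apply: eq_bigr => k _.
rewrite (eq_bigr (fun _ => f k)); last first.
  move=> H /andP[sHB /eqP <-]; rewrite inordK // ltnS; exact: subset_leq_card.
rewrite sumr_const -(cards_draws B k) mulr_natl; congr (_ *+ _).
apply: eq_card => H; rewrite !inE -topredE /=.
case sHB: (H \subset B) => //=.
apply/eqP/eqP => [<-|Hk]; first by rewrite inordK // ltnS subset_leq_card.
by apply: val_inj; rewrite /= inordK // Hk.
Qed.

Lemma sum_subsets_binomial (T : finType) (B : {set T}) (p q : R) :
  \sum_(H : {set T} | H \subset B) p ^+ #|H| * q ^+ (#|B| - #|H|) = (p + q) ^+ #|B|.
Proof.
rewrite (sum_subsets_card B (fun j => p ^+ j * q ^+ (#|B| - j))) addrC exprDn.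
by apply: eq_bigr => i _; rewrite mulr_natl mulrC.
Qed.

Lemma sum_sets_card (T : finType) (f : nat -> R) :
  \sum_(H : {set T}) f #|H| = \sum_(k < #|T|.+1) 'C(#|T|, k)%:R * f k.
Proof.
rewrite -cardsT -sum_subsets_card.
by apply: eq_bigl => H; rewrite finset.subsetT.
Qed.

(* Writing G = H :|: F with H \subset A :\: F reduces the sum to the binomial
   expansion of (p + (1 - p)) ^+ #|A :\: F|. *)
Lemma sum_supersets_binomial (T : finType) (A F : {set T}) (p : R) : F \subset A ->
  \sum_(G : {set T} | (G \subset A) && (F \subset G))
     p ^+ #|G| * (1 - p) ^+ (#|A| - #|G|) = p ^+ #|F|.
Proof.
move=> sFA.
rewrite (reindex_onto (fun H => H :|: F) (fun G => G :\: F)); last first.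
  move=> G /andP[_ sFG].
  by rewrite finset.setUC -{2}(finset.setID G F) (finset.setIidPr sFG).
rewrite (eq_bigl (fun H : {set T} => H \subset A :\: F)); last first.
  move=> H; rewrite subsetD finset.subUset sFA finset.subsetUr !andbT.
  by rewrite finset.setDUl finset.setDv finset.setU0 (sameP eqP finset.setDidPl).
transitivity (\sum_(H : {set T} | H \subset A :\: F)
                 p ^+ #|F| * (p ^+ #|H| * (1 - p) ^+ (#|A :\: F| - #|H|))).
  apply: eq_bigr => H; rewrite subsetD => /andP[_ dHF].
  have /leqifP := leq_card_setU H F; rewrite dHF => /eqP ->.
  rewrite cardsDS // exprD subnDA [(#|A| - _ - _)%N]subnAC; ring.
by rewrite -mulr_sumr sum_subsets_binomial addrC subrK expr1n mulr1.
Qed.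
End SubsetSums.

Section GnpProbability.
Variables (R : realType) (n : nat) (p : R).
Hypotheses (p_ge0 : 0 <= p) (p_le1 : p <= 1).

Lemma gnp_prob_ge0 (P : pred {set 'I_n * 'I_n}) : 0 <= gnp_prob p P.
Proof. by apply: sumr_ge0 => G _; rewrite mulr_ge0 ?exprn_ge0 ?subr_ge0. Qed.

Lemma gnp_prob_le (P Q : pred {set 'I_n * 'I_n}) :
  (forall G, P G -> Q G) -> gnp_prob p P <= gnp_prob p Q.
Proof.
move=> PQ; rewrite /gnp_prob [leLHS]big_mkcondr [leRHS]big_mkcondr.
apply: ler_sum => G _; case: (boolP (P G)) => [/PQ -> //|_].
by case: ifP => // _; rewrite mulr_ge0 ?exprn_ge0 ?subr_ge0.
Qed.

Lemma gnp_prob_exists (I : finType) (P : pred I) (Q : I -> pred {set 'I_n * 'I_n}) :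
  gnp_prob p (fun G => [exists i, P i && Q i G]) <= \sum_(i | P i) gnp_prob p (Q i).
Proof.
have w_ge0 (G : {set 'I_n * 'I_n}) : 0 <= p ^+ #|G| * (1 - p) ^+ (#|pairs n| - #|G|).
  by rewrite mulr_ge0 ?exprn_ge0 ?subr_ge0.
rewrite /gnp_prob; under [leRHS]eq_bigr do rewrite big_mkcondr.
rewrite exchange_big big_mkcondr /=; apply: ler_sum => G _.
case: existsP => [[i /andP[Pi QiG]]|_]; last by apply: sumr_ge0 => i _; case: ifP.
by rewrite (bigD1 i) //= QiG lerDl; apply: sumr_ge0 => j _; case: ifP.
Qed.

Lemma gnp_prob_supset_le (F : {set 'I_n * 'I_n}) :
  gnp_prob p (fun G => F \subset G) <= p ^+ #|F|.
Proof.
have [sFA|nsFA] := boolP (F \subset pairs n).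
  rewrite /gnp_prob -(sum_supersets_binomial p sFA) le_eqVlt; apply/orP; left.
  by apply/eqP/eq_bigl => G; rewrite powersetE.
rewrite /gnp_prob big1 ?exprn_ge0 // => G /andP[]; rewrite powersetE => sGA sFG.
by rewrite (fintype.subset_trans sFG sGA) in nsFA.
Qed.

(* The pairs inside S are counted crudely, as S x S. *)
Lemma gnp_prob_eS_ge (S : {set 'I_n}) (m : nat) :
  gnp_prob p (fun G => (m <= eS G S)%N) <= 'C(#|S| * #|S|, m)%:R * p ^+ m.
Proof.
pose draws := [set F : {set 'I_n * 'I_n} | F \subset finset.setX S S & #|F| == m].
apply: (@le_trans _ _ (gnp_prob p (fun G => [exists F, (F \in draws) && (F \subset G)]))).
  apply: gnp_prob_le => G m_le.
  set GS := [set e in G | (e.1 \in S) && (e.2 \in S)].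
  have : (0 < #|[set F : {set 'I_n * 'I_n} | F \subset GS & #|F| == m]|)%N.
    by rewrite cards_draws bin_gt0.
  case/fintype.card_gt0P => F; rewrite inE => /andP[sFGS cF]; apply/existsP; exists F.
  rewrite inE cF andbT; apply/andP; split; apply: (fintype.subset_trans sFGS).
    by apply/fintype.subsetP => e; rewrite !inE => /andP[_ ->].
  by apply/fintype.subsetP => e; rewrite inE => /andP[].
have := gnp_prob_exists (fun F => F \in draws) (fun F G => F \subset G).
move/le_trans; apply.
apply: (@le_trans _ _ (\sum_(F in draws) p ^+ m)).
  by apply: ler_sum => F; rewrite inE => /andP[_ /eqP <-]; exact: gnp_prob_supset_le.
by rewrite sumr_const cards_draws cardsX mulr_natl.
Qed.

End GnpProbability.

Section BinomialEstimates.
Variable R : realType.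

Lemma ffact_leq_expn (n m : nat) : (n ^_ m <= n ^ m)%N.
Proof.
rewrite ffact_prod -[X in (_ <= _ ^ X)%N](card_ord m) -prod_nat_const.
by apply: leq_prod => i _; exact: leq_subr.
Qed.

(* m ^ m / m`! is one term of the exponential series of e ^ m. *)
Lemma expn_le_fact_expR (m : nat) : m%:R ^+ m <= m`!%:R * expR (1 : R) ^+ m.
Proof.
case: m => [|m]; first by rewrite !expr0 mulr1.
rewrite -expRM_natl mulr1 mulrC -ler_pdivrMr ?ltr0n ?fact_gt0 //.
by apply: le_trans (expR_ge1Dxn m (ler0n _ _)); rewrite lerDr.
Qed.

Lemma bin_expn_le (n m : nat) : 'C(n, m)%:R * m%:R ^+ m <= (expR (1 : R) * n%:R) ^+ m.
Proof.
apply: le_trans (ler_wpM2l (ler0n _ _) (expn_le_fact_expR m)) _.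
rewrite mulrA -natrM bin_ffact exprMn mulrC ler_wpM2l ?exprn_ge0 ?expR_ge0 //.
by rewrite -natrX ler_nat ffact_leq_expn.
Qed.

Lemma dense_set_term_le (n s t : nat) (p : R) : 0 <= p -> (0 < t)%N ->
  'C(n, s)%:R * ('C(s * s, s + t)%:R * p ^+ (s + t)) <=
  (expR 1 ^+ 2 * n%:R * p) ^+ s * (expR 1 * s%:R * p) ^+ t.
Proof.
move=> p_ge0 t_gt0; set e := expR (1 : R).
have e_ge0 : 0 <= e := expR_ge0 1.
case: s => [|s].
  by rewrite bin0n eqn0Ngt t_gt0 mul0r mulr0 mulr_ge0 ?exprn_ge0 ?mulr_ge0.
set m := s.+1; have m_gt0 : 0 < m%:R :> R by rewrite ltr0n.
rewrite -(@ler_pM2r _ (m%:R ^+ m * m%:R ^+ (m + t))) ?mulr_gt0 ?exprn_gt0 //.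
have -> : (e ^+ 2 * n%:R * p) ^+ m * (e * m%:R * p) ^+ t * (m%:R ^+ m * m%:R ^+ (m + t))
    = (e * n%:R) ^+ m * (e * (m * m)%:R) ^+ (m + t) * p ^+ (m + t).
  by rewrite natrM !exprMn !exprD; ring.
have -> : 'C(n, m)%:R * ('C(m * m, m + t)%:R * p ^+ (m + t)) * (m%:R ^+ m * m%:R ^+ (m + t))
    = ('C(n, m)%:R * m%:R ^+ m) * ('C(m * m, m + t)%:R * m%:R ^+ (m + t)) * p ^+ (m + t).
  by ring.
apply: ler_wpM2r; first exact: exprn_ge0.
apply: ler_pM; rewrite ?mulr_ge0 ?exprn_ge0 ?bin_expn_le //.
apply: le_trans (bin_expn_le _ _); rewrite ler_wpM2l // lerXn2r ?nnegrE //.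
by rewrite ler_nat leq_addr.
Qed.

Lemma sum_ord_leq_const (N T : nat) (c : R) :
  \sum_(k < N) (if (k <= T)%N then c else 0) = c *+ minn N T.+1.
Proof.
elim: N => [|N IH]; first by rewrite big_ord0.
rewrite big_ord_recr /= IH; case: (leqP N T) => NT.
  have -> : minn N.+1 T.+1 = (minn N T.+1).+1 by lia.
  by rewrite mulrS addrC.
have -> : minn N.+1 T.+1 = minn N T.+1 by lia.
by rewrite addr0.
Qed.

End BinomialEstimates.

Lemma gnp_prob_dense_le (R : realType) (n t : nat) (p X : R) :
  0 <= p -> p <= 1 -> (0 < t)%N -> 0 <= X -> 1 <= expR 1 ^+ 2 * n%:R * p ->
  gnp_prob p (fun G => [exists S : {set 'I_n},
                          ((#|S|%:R : R) <= X) && (#|S| + t <= eS G S)%N])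
  <= (X + 1) * (expR (X * ln (expR 1 ^+ 2 * n%:R * p)) * (expR 1 * X * p) ^+ t).
Proof.
move=> p_ge0 p_le1 t_gt0 X_ge0 b_ge1.
set b := expR 1 ^+ 2 * n%:R * p.
set Bnd := expR (X * ln b) * (expR 1 * X * p) ^+ t.
have b_gt0 : 0 < b by apply: lt_le_trans b_ge1.
have Bnd_ge0 : 0 <= Bnd by rewrite mulr_ge0 ?expR_ge0 ?exprn_ge0 ?mulr_ge0 ?expR_ge0.
apply: le_trans (gnp_prob_exists p_ge0 p_le1 _ _) _.
apply: le_trans (ler_sum _ (fun S _ => gnp_prob_eS_ge p_ge0 p_le1 S (#|S| + t))) _.
rewrite big_mkcond /= (sum_sets_card 'I_n (fun s => if s%:R <= X
  then 'C(s * s, s + t)%:R * p ^+ (s + t) else 0)) card_ord.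
apply: (@le_trans _ _ (\sum_(s < n.+1) (if (s <= Num.trunc X)%N then Bnd else 0))).
  apply: ler_sum => s _; rewrite truncn_ge_nat //.
  case: ifP => s_le; last by rewrite mulr0.
  apply: le_trans (dense_set_term_le n s p_ge0 t_gt0) _.
  apply: ler_pM; rewrite ?exprn_ge0 ?mulr_ge0 ?expR_ge0 ?(le_trans _ b_ge1) //.
    rewrite -[b ^+ s]lnK ?posrE ?exprn_gt0 // lnXn // ler_expR -mulr_natl.
    by rewrite ler_wpM2r // ln_ge0.
  by rewrite lerXn2r ?nnegrE ?mulr_ge0 ?expR_ge0 // ler_wpM2r // ler_wpM2l ?expR_ge0.
rewrite sum_ord_leq_const -mulr_natr mulrC.
apply: ler_pM; rewrite ?ler0n //.
apply: (@le_trans _ _ (Num.trunc X).+1%:R); first by rewrite ler_nat geq_minr.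
by rewrite -natr1 lerD2r truncn_le.
Qed.

Section LogEstimates.
Variable R : realType.

Lemma ln_gt0_gt1 (x : R) : 0 < ln x -> 1 < x.
Proof.
by move=> lnx_gt0; rewrite ltNge; apply: contraTN lnx_gt0 => /ln_le0; rewrite -leNgt.
Qed.

Lemma ln_le_sqrt (x : R) : 0 < x -> ln x <= 2 * Num.sqrt x.
Proof.
move=> x_gt0; have s_gt0 : 0 < Num.sqrt x by rewrite sqrtr_gt0.
rewrite -{1}(sqr_sqrtr (ltW x_gt0)) lnXn // mulr2n.
have := ln_sublinear s_gt0; lra.
Qed.

Lemma expR_ge_twice (x : R) : 0 <= x -> 2 * x <= expR x.
Proof.
move=> x_ge0; have e_ge2 : 2 <= expR (1 : R) by have := expR_ge1Dx (1 : R); lra.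
have -> : expR x = expR 1 * expR (x - 1) by rewrite -expRD addrC subrK.
apply: le_trans (ler_wpM2r x_ge0 e_ge2) _; rewrite ler_wpM2l ?expR_ge0 //.
by have := expR_ge1Dx (x - 1); lra.
Qed.

Lemma ln_ge_near (c : R) : \forall x \near +oo, c <= ln x.
Proof.
near=> x.
have x_ge : expR c <= x by near: x; apply: nbhs_pinfty_ge; exact: num_real.
by rewrite -(expRK c) ler_ln ?posrE ?expR_gt0 ?(lt_le_trans (expR_gt0 c)).
Unshelve. all: end_near. Qed.

Lemma ln_nat_cvgy : ln (n%:R : R) @[n --> \oo] --> +oo.
Proof. by apply: cvg_comp cvgr_idn _; apply/cvgryPge; exact: ln_ge_near. Qed.

Lemma mul_ln_le_near (a b : R) : 0 <= a -> 0 < b ->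
  \forall x \near +oo, a * ln x <= b * x.
Proof.
move=> a_ge0 b_gt0; near=> x.
have x_gt0 : 0 < x by near: x; apply: nbhs_pinfty_gt; exact: num_real.
have sqrt_ge : 2 * a / b <= Num.sqrt x.
  have c_ge0 : 0 <= 2 * a / b by rewrite divr_ge0 ?mulr_ge0 // ltW.
  rewrite -(ger0_norm c_ge0) -sqrtr_sqr; apply: ler_wsqrtr.
  by near: x; apply: nbhs_pinfty_ge; exact: num_real.
apply: le_trans (ler_wpM2l a_ge0 (ln_le_sqrt x_gt0)) _.
rewrite -{2}(sqr_sqrtr (ltW x_gt0)) expr2 mulrA [leRHS]mulrA ler_wpM2r ?sqrtr_ge0 //.
by rewrite mulrC -ler_pdivrMl // [leLHS]mulrC.
Unshelve. all: end_near. Qed.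

Lemma expR_Nmul_ln_nat_cvg0 (c : R) : 0 < c ->
  expR (- (c * ln (n%:R : R))) @[n --> \oo] --> 0.
Proof.
move=> c_gt0.
have c_ln_cvgy : c * ln (n%:R : R) @[n --> \oo] --> +oo.
  apply/cvgryPge => A; near=> n; rewrite -ler_pdivrMl //.
  by near: n; exact: (cvgryPge _).1 ln_nat_cvgy _.
by have := cvg_comp _ _ c_ln_cvgy (@cvgr_expR R).
Unshelve. all: end_near. Qed.

End LogEstimates.

(* The expected degree n p of G(n, p) as a function of L = log n:
   [p_k R k n] is [mean_degree k (ln n) / n] by definition. *)
Definition mean_degree (R : realType) (k : nat) (L : R) : R :=
  L + k.+1%:R * ln L - ln (ln L).

Section MeanDegree.
Variables (R : realType) (k : nat).

Lemma mean_degree_ge (L : R) : 1 <= ln L -> L <= mean_degree k L.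
Proof.
move=> lnL_ge1; have lnL_gt0 : 0 < ln L by lra.
have := ln_sublinear lnL_gt0.
have : ln L <= k.+1%:R * ln L by rewrite ler_peMl ?ler1n ?ltW.
rewrite /mean_degree; lra.
Qed.

Lemma mean_degree_le (L : R) : 1 <= ln L -> k.+1%:R * ln L <= L ->
  mean_degree k L <= 2 * L.
Proof. by move=> lnL_ge1; have := ln_ge0 lnL_ge1; rewrite /mean_degree; lra. Qed.

Lemma ln_mean_degree_le (L : R) : 1 <= ln L -> k.+1%:R * ln L <= L ->
  ln (expR 1 ^+ 2 * mean_degree k L) <= 3 + ln L.
Proof.
move=> lnL_ge1 k_lnL_le; have L_gt1 : 1 < L by apply: ln_gt0_gt1; lra.
have := mean_degree_ge lnL_ge1; have := mean_degree_le lnL_ge1 k_lnL_le.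
set np := mean_degree k L => np_le np_ge.
rewrite lnM ?posrE ?exprn_gt0 ?expR_gt0 //; last lra.
rewrite lnXn ?expR_gt0 // expRK.
have : ln np <= ln (1 + 1) + ln L.
  by rewrite -lnM ?posrE ?ler_ln ?posrE ?mulr_gt0; lra.
by have := le_ln1Dx (_ : -1 < 1 :> R); lra.
Qed.

End MeanDegree.

Section FirstMomentDecay.
Variables (R : realType) (k t : nat) (alpha L : R).

Let X := alpha * t%:R * (L / ln L).
Let p := mean_degree k L / expR L.

(* With 12 X <= (1 - alpha) t L, the factor e^(3 X) coming from
   ln (e^2 n p) <= 3 + ln L is at most expR ((1 - alpha) t L / 4); the last
   hypothesis bounds the polylogarithmic factor 2 L^(2t + 1) in the same way. *)
Lemma first_moment_decay :
  0 < alpha -> alpha < 1 -> 1 <= ln L -> k.+1%:R * ln L <= L -> t%:R <= ln L ->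
  12 * alpha <= (1 - alpha) * ln L ->
  (2 * t).+1%:R * ln L <= (1 - alpha) * t%:R / 4 * L ->
  (X + 1) * (expR (X * ln (expR 1 ^+ 2 * mean_degree k L)) * (expR 1 * X * p) ^+ t)
  <= 2 * (2 * expR 1) ^+ t * expR (- ((1 - alpha) * t%:R / 2 * L)).
Proof.
move=> alpha_gt0 alpha_lt1 lnL_ge1 k_lnL_le t_le_lnL alpha_le_lnL poly_lnL.
set e := expR (1 : R); set beta := (1 - alpha) * t%:R.
set np := mean_degree k L.
have L_gt1 : 1 < L by apply: ln_gt0_gt1; lra.
have np_ge : L <= np := mean_degree_ge k lnL_ge1.
have np_le : np <= 2 * L := mean_degree_le lnL_ge1 k_lnL_le.
have np_gt0 : 0 < np by lra.
have e_gt0 : 0 < e := expR_gt0 1.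
have lnL_gt0 : 0 < ln L by lra.
have X_ge0 : 0 <= X by rewrite /X !mulr_ge0 ?invr_ge0 ?ler0n //; lra.
have XLL : X * ln L = alpha * t%:R * L by rewrite /X; field; rewrite gt_eqF.
have tL_ge0 : 0 <= t%:R * L by rewrite mulr_ge0 ?ler0n //; lra.
have X_le : X <= L.
  rewrite -(ler_pM2r lnL_gt0) XLL.
  have : alpha * (t%:R * L) <= t%:R * L by rewrite ler_piMl //; lra.
  have : t%:R * L <= ln L * L by rewrite ler_wpM2r //; lra.
  lra.
have X12 : 12 * X <= beta * L.
  rewrite -(ler_pM2r lnL_gt0) -mulrA XLL /beta.
  have := ler_wpM2r tL_ge0 alpha_le_lnL; lra.
have lnb : ln (e ^+ 2 * np) <= 3 + ln L := ln_mean_degree_le lnL_ge1 k_lnL_le.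
have p_le : p <= 2 * L * expR (- L).
  by rewrite /p expRN ler_pdivrMr ?expR_gt0 // mulfVK ?gt_eqF ?expR_gt0.
have hX : X + 1 <= 2 * L by lra.
have hb : expR (X * ln (e ^+ 2 * np)) <= expR (alpha * t%:R * L + beta * L / 4).
  rewrite ler_expR; apply: le_trans (ler_wpM2l X_ge0 lnb) _; nra.
have p_ge0 : 0 <= p by rewrite /p -/np divr_ge0 ?expR_ge0 //; lra.
have eXp_ge0 : 0 <= e * X * p by rewrite mulr_ge0 // mulr_ge0 // ltW.
have hp : (e * X * p) ^+ t <= (2 * e) ^+ t * L ^+ (2 * t) * expR (- (t%:R * L)).
  have eXp_le : e * X * p <= 2 * e * L ^+ 2 * expR (- L).
    have -> : 2 * e * L ^+ 2 * expR (- L) = e * (L * (2 * L * expR (- L))) by ring.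
    by rewrite -mulrA; apply: ler_wpM2l; [exact: ltW | apply: ler_pM].
  apply: le_trans (lerXn2r t _ _ eXp_le) _; rewrite ?nnegrE //; first exact: le_trans eXp_le.
  by rewrite exprMn [(2 * e * _) ^+ t]exprMn -exprM -expRM_natl mulrN.
have hL : L ^+ (2 * t).+1 <= expR (beta * L / 4).
  by rewrite -[in leLHS](lnK (_ : L \is Num.pos)) ?posrE -?expRM_natl ?ler_expR // /beta; lra.
apply: (@le_trans _ _ (2 * L * (expR (alpha * t%:R * L + beta * L / 4) *
    ((2 * e) ^+ t * L ^+ (2 * t) * expR (- (t%:R * L)))))).
  apply: ler_pM => //; first lra.
    by rewrite mulr_ge0 ?expR_ge0 // exprn_ge0.
  by apply: ler_pM; rewrite ?expR_ge0 ?exprn_ge0.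
have -> : 2 * L * (expR (alpha * t%:R * L + beta * L / 4) *
    ((2 * e) ^+ t * L ^+ (2 * t) * expR (- (t%:R * L)))) =
    2 * (2 * e) ^+ t * (L ^+ (2 * t).+1 *
      expR (alpha * t%:R * L + beta * L / 4 - t%:R * L)).
  by rewrite !expRD exprS; ring.
apply: ler_wpM2l; first by rewrite mulr_ge0 // exprn_ge0 // mulr_ge0 // ltW.
apply: le_trans (ler_wpM2r (expR_ge0 _) hL) _.
by rewrite -expRD ler_expR /beta; lra.
Qed.

End FirstMomentDecay.

Section BadEvent.
Variables (R : realType) (k t n : nat) (alpha : R).
Let L := ln (n%:R : R).

Lemma gnp_prob_bad_le : (0 < t)%N -> 0 < alpha -> alpha < 1 ->
  1 <= ln L -> k.+1%:R * ln L <= L -> t%:R <= ln L ->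
  12 * alpha <= (1 - alpha) * ln L ->
  (2 * t).+1%:R * ln L <= (1 - alpha) * t%:R / 4 * L ->
  0 <= gnp_prob (p_k R k n) (@bad R alpha t n)
    <= 2 * (2 * expR 1) ^+ t * expR (- ((1 - alpha) * t%:R / 2 * L)).
Proof.
move=> t_gt0 alpha_gt0 alpha_lt1 lnL_ge1 k_lnL_le t_le_lnL alpha_le_lnL poly_lnL.
have L_gt1 : 1 < L by apply: ln_gt0_gt1; lra.
have n_gt1 : 1 < n%:R :> R by apply: ln_gt0_gt1; rewrite -/L; lra.
have nE : n%:R = expR L by rewrite /L lnK // posrE; lra.
have np_ge := mean_degree_ge k lnL_ge1.
have np_le := mean_degree_le lnL_ge1 k_lnL_le.
have pE : p_k R k n = mean_degree k L / expR L by rewrite -nE.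
have p_ge0 : 0 <= p_k R k n by rewrite pE divr_ge0 ?expR_ge0 //; lra.
have p_le1 : p_k R k n <= 1.
  rewrite pE ler_pdivrMr ?expR_gt0 // mul1r.
  by apply: le_trans (expR_ge_twice _); lra.
have bE : expR 1 ^+ 2 * n%:R * p_k R k n = expR 1 ^+ 2 * mean_degree k L.
  by rewrite pE -nE -mulrA [n%:R * _]mulrC divfK // gt_eqF //; lra.
apply/andP; split; first exact: gnp_prob_ge0.
apply: le_trans (gnp_prob_dense_le p_ge0 p_le1 t_gt0 _ _) _.
- by rewrite /Dn -/L !mulr_ge0 ?invr_ge0 ?ler0n //; lra.
- rewrite bE mulr_ege1 //; last lra.
  by rewrite exprn_ege1 // -expR0 ler_expR.
by rewrite bE pE; exact: first_moment_decay.
Qed.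

End BadEvent.

Theorem lemma5 (R : realType) (k t : nat) (alpha : R) :
  (1 <= k)%N -> (1 <= t)%N -> 0 < alpha -> alpha < 1 ->
  (fun n : nat => gnp_prob (p_k R k n) (@bad R alpha t n)) @ \oo --> (0 : R).
Proof.
move=> _ t_gt0 alpha_gt0 alpha_lt1.
have beta_gt0 : 0 < (1 - alpha) * t%:R by rewrite mulr_gt0 ?subr_gt0 ?ltr0n.
apply: (@squeeze_cvgr _ _ _ _ (cst 0)
  (fun n => 2 * (2 * expR 1) ^+ t * expR (- ((1 - alpha) * t%:R / 2 * ln n%:R)))).
- near=> n; apply: gnp_prob_bad_le => //.
  + by near: n; exact: ln_nat_cvgy _ (ln_ge_near _).
  + rewrite -[leRHS]mul1r.
    by near: n; exact: ln_nat_cvgy _ (mul_ln_le_near (ler0n _ _) ltr01).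
  + by near: n; exact: ln_nat_cvgy _ (ln_ge_near _).
  + rewrite [leRHS]mulrC -ler_pdivrMr ?subr_gt0 //.
    by near: n; exact: ln_nat_cvgy _ (ln_ge_near _).
  + near: n; apply: ln_nat_cvgy _ (mul_ln_le_near (ler0n _ _) _).
    by rewrite divr_gt0.
- exact: cvg_cst.
- rewrite -(mulr0 (2 * (2 * expR (1 : R)) ^+ t)); apply: cvgMr.
  by apply: expR_Nmul_ln_nat_cvg0; rewrite divr_gt0.
Unshelve. all: end_near. Qed.
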